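(* Assume $\mathbb{E}[V(yZ_T^0)]<\infty$ for every $y>0$. Then: (1) for every $y>0$, $v(y):=\mathbb{E}[V(yZ_T^0)]=\sup_{x>0}\{u(x,U)-xy\}$; (2) the function $x\mapsto u(x,U_c)$ coincides on $(0,\infty)$ with the concave envelope of the function $x\mapsto u(x,U)$.
   Context: Fix $T>0$ and a filtered probability space $(\Omega,\mathcal F,(\mathcal F_t)_{0\le t\le T},\mathbf P)$ satisfying the usual conditions. Fix $0<\lambda<1$ and a strictly positive càdlàg adapted stock price $S$. A $\lambda$-consistent price system is a strictly positive process $Z=(Z^0,Z^1)$ with $Z^0_0=1$, $Z^0$ a $\mathbf P$-martingale, $Z^1$ a $\mathbf P$-local martingale, and $Z^1_t/Z^0_t\in[(1-\lambda)S_t,S_t]$ a.s. for all $t$. Standing assumption: one such $Z$ is fixed. Following the paper, $\mathcal C(x)=\{f\in L^0_+(\mathbf P):\mathbb{E}[Z_T^0 f]\le x\}$ for $x>0$. A utility is a function $U:(0,\infty)\to\mathbb R$ that is non-constant, increasing, upper semicontinuous, with $U(\infty):=\lim_{x\to\infty}U(x)>0$ and $\lim_{x\to\infty}U(x)/x=0$; $U$ need not be concave. $U$ is extended by $-\infty$ on $(-\infty,0)$ and $U(0):=\lim_{x\downarrow0}U(x)$. For $f\ge0$, $\mathbb{E}[U(f)]:=-\infty$ if $U^-(f)\notin L^1$. For a utility-type function $W$ (here $W=U$ or $W=U_c$), $u(x,W):=\sup\{\mathbb{E}[W(f)]:f\in\mathcal C(x)\}$. The concave envelope $U_c$ of $U$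 is the smallest concave function $\mathbb R\to\mathbb R\cup\{-\infty\}$ with $U_c\ge U$; the concave envelope of a function $g$ on $(0,\infty)$ is likewise the smallest concave function dominating $g$. The convex conjugate of $U$ is $V(y):=\sup_{x>0}\{U(x)-xy\}$, $y>0$. *)

From HB Require Import structures.
From mathcomp Require Import all_boot all_order all_algebra.
From mathcomp Require Import all_classical all_reals all_analysis.
Set Implicit Arguments. Unset Strict Implicit. Unset Printing Implicit Defensive.
Import Order.TTheory GRing.Theory Num.Theory.
Import numFieldNormedType.Exports.
Local Open Scope classical_set_scope.
Local Open Scope ring_scope.

Section FinanceDefs.
Context {R : realType} {d : measure_display} {Omega : measurableType d}.
Variable P : probability Omega R.
Variable T : R.

Definition filtration (F : R -> set (set Omega)) : Prop :=
  (forall t, @sigma_algebra Omega setT (F t) /\ F t `<=` measurable) /\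
  (forall s t, 0 <= s -> s <= t -> t <= T -> F s `<=` F t).

Definition usual_conditions (F : R -> set (set Omega)) : Prop :=
  (forall t, 0 <= t -> t < T ->
     forall A, (forall s, t < s -> s <= T -> F s A) -> F t A) /\
  (forall N, (exists M, measurable M /\ P M = 0%E /\ N `<=` M) -> F 0 N).

(* processes are maps X : R -> Omega -> R, only relevant for t in [0,T] *)
Definition adapted (F : R -> set (set Omega)) (X : R -> Omega -> R) : Prop :=
  forall t, 0 <= t -> t <= T ->
    forall B : set R, measurable B -> F t (X t @^-1` B).

Definition cadlag (X : R -> Omega -> R) : Prop :=
  forall w,
    (forall t, 0 <= t -> t < T -> (fun s => X s w) @ at_right t --> X t w) /\
    (forall t, 0 < t -> t <= T -> cvg ((fun s => X s w) @ at_left t)).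

Definition martingale (F : R -> set (set Omega)) (X : R -> Omega -> R) : Prop :=
  adapted F X /\
  (forall t, 0 <= t -> t <= T -> P.-integrable setT (fun w => (X t w)%:E)) /\
  (forall s t, 0 <= s -> s <= t -> t <= T -> forall A, F s A ->
     (\int[P]_(w in A) (X t w)%:E = \int[P]_(w in A) (X s w)%:E)%E).

Definition stopping_time (F : R -> set (set Omega)) (tau : Omega -> R) : Prop :=
  (forall w, 0 <= tau w <= T) /\
  (forall t, 0 <= t -> t <= T -> F t [set w | tau w <= t]).

Definition local_martingale (F : R -> set (set Omega)) (X : R -> Omega -> R) : Prop :=
  adapted F X /\
  exists tau : nat -> Omega -> R,
    (forall n, stopping_time F (tau n)) /\
    (forall n w, tau n w <= tau n.+1 w) /\
    {ae P, forall w, exists n, tau n w = T} /\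
    (forall n, martingale F (fun t w => X (Order.min t (tau n w)) w)).

Definition consistent_price_system (F : R -> set (set Omega)) (lam : R)
  (S Z0 Z1 : R -> Omega -> R) : Prop :=
  (forall t w, 0 <= t -> t <= T -> 0 < Z0 t w /\ 0 < Z1 t w) /\
  (forall w, Z0 0 w = 1) /\
  martingale F Z0 /\ local_martingale F Z1 /\
  (forall t, 0 <= t -> t <= T ->
     {ae P, forall w, (1 - lam) * S t w <= Z1 t w / Z0 t w <= S t w}).

End FinanceDefs.

Section UtilityDefs.
Context {R : realType}.

(* U : (0,oo) -> R is a (possibly non-concave) utility *)
Definition is_utility (U : R -> R) : Prop :=
  (exists x y, 0 < x /\ 0 < y /\ U x != U y) /\
  (forall x y, 0 < x -> x <= y -> U x <= U y) /\
  (forall x : R, 0 < x -> forall e : R, 0 < e ->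
     \forall z \near x, U z < U x + e) /\
  (exists l : \bar R, ((fun x => (U x)%:E) @ +oo --> l) /\ (0 < l)%E) /\
  ((fun x => U x / x) @ +oo --> 0).

(* extension of U to R: -oo on (-oo,0), U(0) := lim_{x -> 0+} U x
   (= inf_{x>0} U x since U is increasing) *)
Definition Uext (U : R -> R) (x : R) : \bar R :=
  if x < 0 then -oo%E
  else if x == 0 then ereal_inf [set (U z)%:E | z in `]0, +oo[%classic]
  else (U x)%:E.

Definition concave_on (D : set R) (h : R -> \bar R) : Prop :=
  (forall x, D x -> h x != +oo%E) /\
  (forall x y t, D x -> D y -> 0 <= t -> t <= 1 ->
     (t%:E * h x + (1 - t)%R%:E * h y <= h (t * x + (1 - t) * y)%R)%E).

(* smallest concave function on D dominating g on D (pointwise infimum of all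
   concave dominating functions, which is itself concave and dominating) *)
Definition concave_envelope_on (D : set R) (g : R -> \bar R) (x : R) : \bar R :=
  ereal_inf [set h x | h in [set h : R -> \bar R |
                 concave_on D h /\ (forall z, D z -> (g z <= h z)%E)]].

Definition Uc (U : R -> R) : R -> \bar R := concave_envelope_on setT (Uext U).

Definition conj_V (U : R -> R) (y : R) : \bar R :=
  ereal_sup [set (U x - x * y)%:E | x in `]0, +oo[%classic].

End UtilityDefs.

Section ProblemDefs.
Context {R : realType} {d : measure_display} {Omega : measurableType d}.
Variable P : probability Omega R.

(* E[W(f)] := -oo if W^-(f) is not integrable *)
Definition expect_utility (W : R -> \bar R) (f : Omega -> R) : \bar R :=
  if (\int[P]_w maxe (- W (f w)) 0%E < +oo)%E
  then (\int[P]_w W (f w))%E else -oo%E.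

Definition budget_set (ZT : Omega -> R) (x : R) : set (Omega -> R) :=
  [set f : Omega -> R | measurable_fun setT f /\ (forall w, 0 <= f w) /\
           (\int[P]_w (ZT w * f w)%:E <= x%:E)%E].

Definition value_fun (ZT : Omega -> R) (W : R -> \bar R) (x : R) : \bar R :=
  ereal_sup [set expect_utility W f | f in budget_set ZT x].

End ProblemDefs.

From HB Require Import structures.
From mathcomp Require Import all_boot all_order all_algebra.
From mathcomp Require Import all_classical all_reals all_analysis.
From mathcomp Require Import measurable_realfun ring lra.
Set Implicit Arguments. Unset Strict Implicit. Unset Printing Implicit Defensive.
Import Order.TTheory GRing.Theory Num.Theory.
Import numFieldNormedType.Exports.
Local Open Scope classical_set_scope.
Local Open Scope ring_scope.

(* Weak duality: Fenchel's inequality U x <= V y + x y, applied at y Z_T^0 and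
   integrated against the budget constraint, bounds every expected utility by
   E[V(y Z_T^0)] + x y.  The bound is attained up to e by a measurable choice
   of a near-maximiser of x |-> U x - x y Z_T^0 among the positive rationals;
   its cost is finite because comparing with V at y/2 gives
   y Z f / 2 <= V(y Z / 2) - V(y Z) + e.
   For (2), u(., U_c) dominates u(., U), and it is concave since mixing two
   strategies stays within the mixed budget and U_c is concave.  Conversely a
   concave majorant h of u(., U) has a supergradient at x, which may be taken
   nonnegative as u(., U) is nondecreasing; the resulting affine majorant of
   u(., U) bounds the dual function by (1), and weak duality for U_c <= V + x y
   transfers that bound to u(x, U_c). *)

Section integrable_bounds.
Local Open Scope ereal_scope.
Context d (T : measurableType d) (R : realType) (mu : {measure set T -> \bar R}).

Lemma integrable_funepos_funeneg (g : T -> \bar R) : measurable_fun setT g ->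
  \int[mu]_x g^\+ x < +oo -> \int[mu]_x g^\- x < +oo -> mu.-integrable setT g.
Proof.
move=> mg gp gn; apply/integrableP; split => //.
rewrite (_ : (fun x => `|g x|) = g^\+ \+ g^\-); last by rewrite -fune_abse.
rewrite ge0_integralD //; first exact: lte_add_pinfty.
- exact: measurable_funepos.
- exact: measurable_funeneg.
Qed.

Lemma integral_funeneg_lt_pinfty_ge (g h : T -> \bar R) : measurable_fun setT g ->
  mu.-integrable setT h -> (forall x, h x <= g x) -> \int[mu]_x g^\- x < +oo.
Proof.
move=> mg ih hg; apply: le_lt_trans (integral_funeneg_lt_pinfty measurableT ih).
apply: ge0_le_integral => //.
- exact: measurable_funeneg.
- exact: measurable_funeneg (measurable_int _ ih).
- by move=> x _; apply: funeneg_le; rewrite ?inE.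
Qed.

Lemma integrable_le (g h : T -> \bar R) : measurable_fun setT g ->
  mu.-integrable setT h -> (forall x, g x <= h x) ->
  \int[mu]_x g^\- x < +oo -> mu.-integrable setT g.
Proof.
move=> mg ih gh gn; apply: integrable_funepos_funeneg => //.
apply: le_lt_trans (integral_funepos_lt_pinfty measurableT ih).
apply: ge0_le_integral => //.
- exact: measurable_funepos.
- exact: measurable_funepos (measurable_int _ ih).
- by move=> x _; apply: funepos_le; rewrite ?inE.
Qed.

Lemma integrable_ge (g h : T -> \bar R) : measurable_fun setT g ->
  mu.-integrable setT h -> (forall x, h x <= g x) ->
  \int[mu]_x g x < +oo -> mu.-integrable setT g.
Proof.
move=> mg ih hg; have gn := integral_funeneg_lt_pinfty_ge mg ih hg.
have gn0 : 0 <= \int[mu]_x g^\- x.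
  by apply: integral_ge0 => x _; exact: funeneg_ge0.
rewrite integralE => gfin; apply: integrable_funepos_funeneg => //.
by move: gn gn0 gfin; case: (\int[mu]_x g^\- x) => // r _ _; rewrite lteBlDr.
Qed.

End integrable_bounds.

Lemma interval_superlevel_measurable (R : realType) (D : set R) (g : R -> \bar R) :
  measurable D -> (forall r : R, is_interval [set x | (r%:E <= g x)%E]) ->
  measurable_fun D g.
Proof.
move=> mD hg.
apply: (measurability (@ErealGenCInfty.G R)) => [|/= _ [_] [r] -> <-].
  exact: ErealGenCInfty.measurableE.
apply: measurableI => //; apply: is_interval_measurable => s t/= gs gt u su.
have := hg r s t; rewrite /= !in_itv /= !andbT in gs gt *.
by move/(_ gs gt u su).
Qed.

Lemma measurable_fun_nat_factor d (T : measurableType d) d' (T' : measurableType d')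
    (N : T -> nat) (phi : nat -> T') :
  (forall n, measurable [set x | N x = n]) -> measurable_fun setT (phi \o N).
Proof.
move=> mN _ A mA; rewrite setTI.
have -> : (phi \o N) @^-1` A = \bigcup_n ([set x | N x = n] `&` [set _ | A (phi n)]).
  apply/seteqP; split => x /=; first by move=> h; exists (N x).
  by case=> n _ [<-].
apply: bigcupT_measurable => n; apply: measurableI => //.
have [An|An] := pselect (A (phi n)).
  by rewrite (_ : [set _ | A (phi n)] = setT) //; apply/seteqP; split.
by rewrite (_ : [set _ | A (phi n)] = set0) //; apply/seteqP; split.
Qed.

Section first_index.
Context d (T : measurableType d) (b : nat -> T -> bool).
Hypotheses (mb : forall n, measurable [set x | b n x]) (hb : forall x, exists n, b n x).

Definition first_index x := ex_minn (hb x).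

Lemma first_indexP x : b (first_index x) x.
Proof. by rewrite /first_index; case: ex_minnP. Qed.

Lemma measurable_first_index_eq n : measurable [set x | first_index x = n].
Proof.
have -> : [set x | first_index x = n] =
    [set x | b n x] `&` \bigcap_k (if (k < n)%N then ~` [set x | b k x] else setT).
  apply/seteqP; split => x /=.
    rewrite /first_index; case: ex_minnP => m bm mmin <-; split => // k _.
    by case: ifPn => // km /= bk; have := mmin k bk; rewrite leqNgt km.
  move=> [bn bk]; rewrite /first_index; case: ex_minnP => m bm mmin.
  apply/eqP; rewrite eqn_leq mmin //= leqNgt; apply/negP => mn.
  by have := bk m I; rewrite mn /=; apply.
apply: measurableI => //; apply: bigcapT_measurable => k.
by case: ifPn => // _; exact/measurableC.
Qed.

End first_index.

Section concave_real.
Context {R : realType}.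

Lemma concave_on_EFinE (D : set R) (h : R -> R) x y t :
  concave_on D (EFin \o h) -> D x -> D y -> 0 <= t -> t <= 1 ->
  t * h x + (1 - t) * h y <= h (t * x + (1 - t) * y).
Proof.
by move=> [_ hc] Dx Dy t0 t1; have := hc x y t Dx Dy t0 t1; rewrite /= -!EFinM -EFinD.
Qed.

Lemma concave_on_fine (D : set R) (h : R -> \bar R) :
  (forall x y t, D x -> D y -> 0 <= t -> t <= 1 -> D (t * x + (1 - t) * y)) ->
  (forall x, D x -> h x \is a fin_num) -> concave_on D h ->
  concave_on D (EFin \o (fine \o h)).
Proof.
move=> Dconv hfin [_ hc]; split => // x y t Dx Dy t0 t1 /=.
rewrite !fineK ?hfin //; last exact: Dconv.
exact: hc.
Qed.

Lemma concave_three_chord (D : set R) (h : R -> R) a b c :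
  concave_on D (EFin \o h) -> D a -> D c -> a < b -> b < c ->
  (h c - h b) / (c - b) <= (h b - h a) / (b - a).
Proof.
move=> hc Da Dc ab bc; have ca : 0 < c - a by lra.
pose t := (c - b) / (c - a).
have t0 : 0 <= t by apply: divr_ge0; lra.
have t1 : t <= 1 by rewrite ler_pdivrMr // mul1r; lra.
have hb : t * h a + (1 - t) * h c <= h b.
  have <- : t * a + (1 - t) * c = b by rewrite /t; field; rewrite gt_eqF.
  exact: concave_on_EFinE hc Da Dc t0 t1.
have {}hb : (c - b) * h a + (b - a) * h c <= (c - a) * h b.
  have <- : (c - a) * (t * h a + (1 - t) * h c) = (c - b) * h a + (b - a) * h c.
    by rewrite /t; field; rewrite gt_eqF.
  by rewrite ler_pM2l.
rewrite ler_pdivrMr ?subr_gt0 // mulrAC ler_pdivlMr ?subr_gt0 // -subr_ge0.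
have -> : (h b - h a) * (c - b) - (h c - h b) * (b - a) =
          (c - a) * h b - ((c - b) * h a + (b - a) * h c) by ring.
by rewrite subr_ge0.
Qed.

(* The slope [s] is the supremum of the right difference quotients at [x]. *)
Lemma concave_supergradient (h : R -> R) x :
  concave_on `]0, +oo[%classic (EFin \o h) -> 0 < x ->
  exists s, forall z, 0 < z -> h z <= h x + s * (z - x).
Proof.
move=> hc x0; have D (z : R) : 0 < z -> `]0, +oo[%classic z by rewrite /= in_itv /= andbT.
have x2 : 0 < x / 2 by rewrite divr_gt0.
have x2x : x / 2 < x by lra.
pose E := [set (h z - h x) / (z - x) | z in [set z | x < z]].
have Eub : has_ubound E.
  exists ((h x - h (x / 2)) / (x - x / 2)) => _ [z /= xz <-].
  exact: concave_three_chord hc (D _ x2) (D _ (lt_trans x0 xz)) x2x xz.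
have E0 : E !=set0 by exists ((h (x + 1) - h x) / (x + 1 - x)), (x + 1) => //=; lra.
exists (sup E) => z z0; have [xz|zx] := ltP x z.
  have : (h z - h x) / (z - x) <= sup E by apply: ub_le_sup => //; exists z.
  by rewrite ler_pdivrMr ?subr_gt0 //; lra.
move: zx; rewrite le_eqVlt => /orP[/eqP ->|zx]; first by rewrite subrr mulr0 addr0.
have : sup E <= (h x - h z) / (x - z).
  apply: ge_sup => // _ [w /= xw <-].
  exact: concave_three_chord hc (D _ z0) (D _ (lt_trans x0 xw)) zx xw.
by rewrite ler_pdivlMr ?subr_gt0 //; lra.
Qed.

End concave_real.

Lemma gt0_mulNyeDl (R : realType) (t : R) (b : \bar R) : 0 < t -> (t%:E * -oo + b = -oo)%E.
Proof. by move=> t0; rewrite muleC gt0_mulNye ?lte_fin // addNye. Qed.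

Lemma gt0_mulNyeDr (R : realType) (t : R) (a : \bar R) : 0 < t -> (a + t%:E * -oo = -oo)%E.
Proof. by move=> t0; rewrite muleC gt0_mulNye ?lte_fin // addeNy. Qed.

Section utility.
Context {R : realType}.
Variable U : R -> R.
Hypothesis hU : is_utility U.

Let U_nondecreasing x y : 0 < x -> x <= y -> U x <= U y.
Proof. by case: hU => _ [h _]; exact: h. Qed.

Lemma conj_V_ge x y : 0 < x -> ((U x - x * y)%:E <= conj_V U y)%E.
Proof. by move=> x0; apply: ereal_sup_ubound; exists x; rewrite //= in_itv /= andbT. Qed.

Lemma utility_sublinear y : 0 < y -> exists M, 0 < M /\ forall x, M <= x -> U x <= y * x.
Proof.
move=> y0; case: hU => _ [_ [_ [_ hlim]]].
have [M [Mr HM]] := cvgr0_norm_lt _ hlim y y0.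
have MM : M <= `|M| := real_ler_norm Mr.
exists (`|M| + 1); split => [|x Mx]; first by rewrite ltr_wpDl.
have x0 : 0 < x by apply: lt_le_trans Mx; rewrite ltr_wpDl.
have /ltW := HM x ltac:(lra).
by move/(le_trans (ler_norm _)); rewrite ler_pdivrMr // mulrC.
Qed.

Lemma conj_V_fin_num y : 0 < y -> conj_V U y \is a fin_num.
Proof.
move=> y0; rewrite fin_numElt; apply/andP; split.
  by apply: lt_le_trans (conj_V_ge y ltr01); rewrite ltNyr.
have [M [M0 HM]] := utility_sublinear y0.
apply: (@le_lt_trans _ _ (`|U M|)%:E); last by rewrite ltry.
apply: ge_ereal_sup => _ [x /= + <-]; rewrite in_itv /= andbT lee_fin => x0.
have xy0 : 0 <= x * y by rewrite mulr_ge0 // ltW.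
have UMM := ler_norm (U M); have UM0 := normr_ge0 (U M).
have [xM|Mx] := leP M x; first by have := HM _ xM; rewrite mulrC; lra.
by have := U_nondecreasing x0 (ltW Mx); lra.
Qed.

Definition conj_Vr y := fine (conj_V U y).

Lemma conj_VE y : 0 < y -> conj_V U y = (conj_Vr y)%:E.
Proof. by move=> y0; rewrite /conj_Vr fineK // conj_V_fin_num. Qed.

Lemma conj_Vr_ge x y : 0 < x -> 0 < y -> U x - x * y <= conj_Vr y.
Proof. by move=> x0 y0; rewrite -lee_fin -conj_VE //; exact: conj_V_ge. Qed.

Lemma conj_V_nonincreasing : {homo conj_V U : y y' / y <= y' >-> (y' <= y)%E}.
Proof.
move=> y y' yy'; apply: ge_ereal_sup => _ [x /= + <-]; rewrite in_itv /= andbT => x0.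
by apply: le_trans (conj_V_ge _ x0); rewrite lee_fin lerD2l lerN2 ler_pM2l.
Qed.

Lemma UextE x : 0 < x -> Uext U x = (U x)%:E.
Proof. by move=> x0; rewrite /Uext ltNge (ltW x0) /= gt_eqF. Qed.

Lemma Uext_lt0 x : x < 0 -> Uext U x = -oo%E.
Proof. by move=> x0; rewrite /Uext x0. Qed.

Lemma Uext0_le x : 0 < x -> (Uext U 0 <= (U x)%:E)%E.
Proof.
move=> x0; rewrite /Uext ltxx eqxx; apply: ereal_inf_lbound.
by exists x; rewrite //= in_itv /= andbT.
Qed.

Lemma Uext_le_conj_Vr x y : 0 <= x -> 0 < y -> (Uext U x <= (conj_Vr y + x * y)%:E)%E.
Proof.
move=> x0 y0; have [xp|] := ltP 0 x.
  by rewrite UextE // lee_fin; have := conj_Vr_ge xp y0; lra.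
move=> xn; have -> : x = 0 by apply/eqP; rewrite eq_le xn x0.
rewrite mul0r addr0; apply/lee_addgt0Pr => e e0.
have ey : 0 < e / y by rewrite divr_gt0.
apply: le_trans (Uext0_le ey) _; rewrite lee_fin.
by have := conj_Vr_ge ey y0; rewrite divfK ?gt_eqF //; lra.
Qed.

Lemma Uext_nondecreasing : {homo Uext U : x y / x <= y >-> (x <= y)%E}.
Proof.
move=> x y xy; have [xn|] := ltP x 0; first by rewrite Uext_lt0 // leNye.
rewrite le_eqVlt => /orP[/eqP x0|xp].
  subst x; move: xy; rewrite le_eqVlt => /orP[/eqP <- //|yp].
  by rewrite (UextE yp); exact: Uext0_le.
by rewrite !UextE ?lee_fin ?(lt_le_trans xp) //; apply: U_nondecreasing.
Qed.

Definition affine_majorant (y x : R) : \bar R :=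
  if x < 0 then -oo%E else (conj_Vr y + x * y)%:E.

Lemma affine_majorant_concave y : concave_on setT (affine_majorant y).
Proof.
split=> [x _|x x' t _ _ t0 t1]; first by rewrite /affine_majorant; case: ifP.
have [->|tp] := eqVneq t 0.
  by rewrite mul0e add0e subr0 mul1e mul0r add0r mul1r.
have [->|t1'] := eqVneq t 1.
  by rewrite subrr mul0e adde0 mul1e mul1r mul0r addr0.
have tp' : 0 < t by rewrite lt_neqAle eq_sym tp t0.
have tq : 0 < 1 - t by rewrite subr_gt0 lt_neqAle t1' t1.
rewrite /affine_majorant; case: ifPn => xn; first by rewrite gt0_mulNyeDl // leNye.
case: ifPn => x'n; first by rewrite gt0_mulNyeDr // leNye.
rewrite -!leNgt in xn x'n.
rewrite ifF; last by apply/negbTE; rewrite -leNgt addr_ge0 // mulr_ge0 // ltW.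
rewrite -!EFinM -EFinD lee_fin.
have -> : t * (conj_Vr y + x * y) + (1 - t) * (conj_Vr y + x' * y) =
          conj_Vr y + (t * x + (1 - t) * x') * y by ring.
by [].
Qed.

Lemma Uext_le_affine_majorant y : 0 < y -> forall x, (Uext U x <= affine_majorant y x)%E.
Proof.
move=> y0 x; rewrite /affine_majorant; case: ifPn => [/Uext_lt0 -> //|].
by rewrite -leNgt => x0; exact: Uext_le_conj_Vr.
Qed.

Let affine_majorant_dominates y : 0 < y ->
  [set h : R -> \bar R | concave_on setT h /\ (forall z, setT z -> (Uext U z <= h z)%E)]
    (affine_majorant y).
Proof.
by move=> y0; split=> [|z _]; [exact: affine_majorant_concave|exact: Uext_le_affine_majorant].
Qed.

Lemma Uc_le_conj_Vr x y : 0 <= x -> 0 < y -> (Uc U x <= (conj_Vr y + x * y)%:E)%E.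
Proof.
move=> x0 y0; apply: ereal_inf_lbound; exists (affine_majorant y).
  exact: affine_majorant_dominates.
by rewrite /affine_majorant ltNge x0.
Qed.

Lemma Uext_le_Uc x : (Uext U x <= Uc U x)%E.
Proof. by apply: le_ereal_inf_tmp => _ [h [_ hd] <-]; apply: hd. Qed.

Lemma Uc_concave : concave_on setT (Uc U).
Proof.
split=> [x _|x x' t _ _ t0 t1].
  rewrite -ltey; apply: (@le_lt_trans _ _ (affine_majorant 1 x)).
    apply: ereal_inf_lbound; exists (affine_majorant 1) => //.
    exact: affine_majorant_dominates ltr01.
  by rewrite /affine_majorant; case: ifP => // _; rewrite ltry.
apply: le_ereal_inf_tmp => _ [h hh <-]; have [[_ hconc] _] := hh.
apply: le_trans (hconc x x' t I I t0 t1).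
have Uch z : (Uc U z <= h z)%E by apply: ereal_inf_lbound; exists h.
by apply: leeD; apply: lee_wpmul2l; rewrite ?lee_fin ?subr_ge0.
Qed.

Lemma measurable_Uext : measurable_fun setT (Uext U).
Proof.
apply: interval_superlevel_measurable => // r a b /= ha hb x /andP[ax xb].
by apply: le_trans ha _; apply: Uext_nondecreasing.
Qed.

Lemma measurable_conj_V : measurable_fun setT (conj_V U).
Proof.
apply: interval_superlevel_measurable => // r a b /= ha hb x /andP[ax xb].
by apply: le_trans hb _; apply: conj_V_nonincreasing.
Qed.

Lemma measurable_Uc : measurable_fun setT (Uc U).
Proof.
apply: interval_superlevel_measurable => // r a b /= ha hb x /andP[ax xb].
have [ab|ab] := eqVneq a b.
  by subst b; have -> : x = a by apply/eqP; rewrite eq_le xb ax.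
have {}ab : a < b by rewrite lt_neqAle ab (le_trans ax xb).
pose t := (b - x) / (b - a).
have t0 : 0 <= t by apply: divr_ge0; lra.
have t1 : t <= 1 by rewrite ler_pdivrMr ?subr_gt0 // mul1r; lra.
have <- : t * a + (1 - t) * b = x by rewrite /t; field; rewrite subr_eq0 gt_eqF.
apply: le_trans (proj2 Uc_concave a b t I I t0 t1).
have -> : r%:E = (t%:E * r%:E + (1 - t)%:E * r%:E)%E.
  by rewrite -!EFinM -EFinD; congr (_%:E); ring.
by apply: leeD; apply: lee_wpmul2l; rewrite ?lee_fin ?subr_ge0.
Qed.

End utility.

Section budget.
Context {R : realType} d (Omega : measurableType d) (P : probability Omega R).

Lemma integrable_EFin_comb (a b : Omega -> R) (k l m : R) :
  P.-integrable setT (EFin \o a) -> P.-integrable setT (EFin \o b) ->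
  P.-integrable setT (fun w => (k * a w + l * b w + m)%:E).
Proof.
move=> ia ib.
have : P.-integrable setT (fun w => k%:E * (a w)%:E + l%:E * (b w)%:E + (EFin \o cst m) w)%E.
  apply: integrableD => //; last exact: finite_measure_integrable_cst.
  by apply: integrableD => //; apply: integrableZl.
by apply: eq_integrable => // w _; rewrite /= -!EFinM -!EFinD.
Qed.

Lemma integral_EFin_cst (c : R) : (\int[P]_w (EFin \o cst c) w = c%:E)%E.
Proof.
rewrite -[LHS]/(\int[P]_w cst c%:E w)%E integral_cst //.
by rewrite -[RHS]mule1; congr (_ * _)%E; exact: probability_setT.
Qed.

Variable Z : Omega -> R.
Hypothesis mZ : measurable_fun setT Z.
Hypothesis Zpos : forall w, 0 < Z w.

Lemma budget_set_integrable f x : budget_set P Z x f ->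
  P.-integrable setT (fun w => (Z w * f w)%:E).
Proof.
case=> mf [f0 fx]; have mZf : measurable_fun setT (fun w => Z w * f w).
  exact: measurable_funM.
apply/integrableP; split; first exact/measurable_EFinP.
apply: le_lt_trans (ltry x); apply: le_trans fx; apply: ge0_le_integral => //.
- by apply/measurableT_comp => //; exact/measurable_EFinP.
- exact/measurable_EFinP.
- by move=> w _; rewrite gee0_abs // lee_fin mulr_ge0 // ltW.
Qed.

Lemma budget_set_le x x' f : x <= x' -> budget_set P Z x f -> budget_set P Z x' f.
Proof. by move=> xx' [mf [f0 fx]]; do 2 split => //; apply: le_trans fx _; rewrite lee_fin. Qed.

Lemma budget_set_cst x : P.-integrable setT (EFin \o Z) -> 0 < x ->
  exists2 c, 0 < c & budget_set P Z x (fun _ => c).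
Proof.
move=> iZ x0; have IZfin := integrable_fin_num measurableT iZ.
have IZ0 : 0 <= fine (\int[P]_w (EFin \o Z) w).
  by rewrite fine_ge0 // integral_ge0 // => w _; rewrite lee_fin ltW.
pose c := x / (fine (\int[P]_w (EFin \o Z) w) + 1).
have c0 : 0 < c by rewrite divr_gt0 // ltr_wpDl.
exists c => //; do 2 split => //; first by move=> _; exact: ltW.
under eq_integral do rewrite EFinM.
rewrite integralZr // -[X in (X * _)%E]/(\int[P]_w (EFin \o Z) w)%E.
rewrite -(fineK IZfin) -EFinM lee_fin /c mulrCA ger_pMr // ler_pdivrMr ?ltr_wpDl //.
lra.
Qed.

End budget.

Section weak_duality.
Context {R : realType} d (Omega : measurableType d) (P : probability Omega R).
Variable U : R -> R.
Hypothesis hU : is_utility U.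
Variable Z : Omega -> R.
Hypothesis mZ : measurable_fun setT Z.
Hypothesis Zpos : forall w, 0 < Z w.
Hypothesis iZ : P.-integrable setT (EFin \o Z).
Hypothesis hV : forall y, 0 < y -> (\int[P]_w conj_V U (y * Z w) < +oo)%E.

Lemma measurable_conj_V_Z y : measurable_fun setT (fun w => conj_V U (y * Z w)).
Proof. exact: measurableT_comp (measurable_conj_V U) (measurable_funM _ mZ). Qed.

Lemma integrable_conj_V_Z y : 0 < y -> P.-integrable setT (fun w => conj_V U (y * Z w)).
Proof.
move=> y0; apply: (integrable_ge (measurable_conj_V_Z y) _ _ (hV y0)).
  exact: (integrable_EFin_comb (- y) 0 (U 1) iZ iZ).
by move=> w /=; rewrite mul0r addr0 mulNr addrC; have := @conj_V_ge _ U 1 (y * Z w) ltr01; rewrite mul1r.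
Qed.

Lemma integrable_conj_Vr_Z y : 0 < y -> P.-integrable setT (EFin \o (fun w => conj_Vr U (y * Z w))).
Proof.
move=> y0; apply: eq_integrable (integrable_conj_V_Z y0) => // w _.
by rewrite /= (conj_VE hU) // mulr_gt0.
Qed.

Section expected_utility.
Variable W : R -> \bar R.
Hypothesis mW : measurable_fun setT W.
Hypothesis W_le_conj_Vr : forall x y, 0 <= x -> 0 < y -> (W x <= (conj_Vr U y + x * y)%:E)%E.

Lemma W_le_dual f y w : 0 <= f w -> 0 < y ->
  (W (f w) <= conj_V U (y * Z w) + y%:E * (Z w * f w)%:E)%E.
Proof.
move=> f0 y0; have yZ0 := mulr_gt0 y0 (Zpos w).
rewrite (conj_VE hU yZ0) -EFinM -EFinD.
by apply: le_trans (W_le_conj_Vr f0 yZ0) _; rewrite lee_fin mulrCA [f w * _]mulrC.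
Qed.

Let integrable_dual f x y : budget_set P Z x f -> 0 < y ->
  P.-integrable setT (fun w => conj_V U (y * Z w) + y%:E * (Z w * f w)%:E)%E.
Proof.
move=> hf y0; apply: integrableD => //; first exact: integrable_conj_V_Z.
by apply: integrableZl => //; exact: budget_set_integrable hf.
Qed.

Lemma expect_utility_integrable f x : budget_set P Z x f ->
  (\int[P]_w maxe (- W (f w)) 0 < +oo)%E -> P.-integrable setT (W \o f).
Proof.
move=> hf; have [mf [f0 _]] := hf.
have -> : (fun w => maxe (- W (f w)) 0)%E = (W \o f)^\-%E.
  by apply/funext => w; rewrite funenegE.
apply: (integrable_le (measurableT_comp mW mf) (integrable_dual hf ltr01)) => w /=.
exact: W_le_dual.
Qed.

Lemma expect_utility_le_dual f x y : budget_set P Z x f -> 0 < y ->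
  (expect_utility P W f <= \int[P]_w conj_V U (y * Z w) + (x * y)%:E)%E.
Proof.
move=> hf y0; rewrite /expect_utility; case: ifPn => hn; last by rewrite leNye.
have [mf [f0 fx]] := hf; have iZf := budget_set_integrable mZ Zpos hf.
apply: le_trans (le_integral measurableT (expect_utility_integrable hf hn)
  (integrable_dual hf y0) (fun w _ => @W_le_dual f y w (f0 w) y0)) _.
rewrite integralD //; [|exact: integrable_conj_V_Z|exact: integrableZl].
rewrite integralZl // leeD2l // mulrC EFinM.
by apply: lee_wpmul2l => //; rewrite lee_fin ltW.
Qed.

Lemma integral_le_expect_utility f x (g : Omega -> \bar R) : budget_set P Z x f ->
  P.-integrable setT g -> (forall w, (g w <= W (f w))%E) ->
  (\int[P]_w g w <= expect_utility P W f)%E.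
Proof.
move=> hf ig gW; have [mf _] := hf.
have hn : (\int[P]_w maxe (- W (f w)) 0 < +oo)%E.
  under eq_integral do rewrite -/((W \o f) _) -funenegE.
  exact: integral_funeneg_lt_pinfty_ge (measurableT_comp mW mf) ig gW.
rewrite /expect_utility hn.
exact: le_integral (expect_utility_integrable hf hn) _.
Qed.

End expected_utility.
End weak_duality.

Section pos_rat_enum.
Context {R : realType}.

Definition pos_rat_enum (n : nat) : R :=
  if (unpickle n : option rat) is Some q then (if 0 < q then ratr q else 1) else 1.

Lemma pos_rat_enum_gt0 n : 0 < pos_rat_enum n.
Proof.
rewrite /pos_rat_enum; case: (unpickle n : option rat) => [q|//].
by case: ifPn => // q0; rewrite ltr0q.
Qed.

Lemma pos_rat_enum_dense (x e : R) : 0 < x -> 0 < e ->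
  exists n, x < pos_rat_enum n < x + e.
Proof.
move=> x0 e0; have /rat_in_itvoo[q] : x < x + e by rewrite ltrDl.
rewrite in_itv /= => /andP[xq qxe].
have q0 : 0 < q by rewrite -(ltr0q R); exact: lt_trans xq.
by exists (pickle q); rewrite /pos_rat_enum pickleK q0 xq qxe.
Qed.

Lemma conj_Vr_pos_rat_approx (U : R -> R) y e : is_utility U -> 0 < y -> 0 < e ->
  exists n, conj_Vr U y - e < U (pos_rat_enum n) - pos_rat_enum n * y.
Proof.
move=> hU y0 e0; have e2 : 0 < e / 2 by rewrite divr_gt0.
have : ((conj_Vr U y - e / 2)%:E < conj_V U y)%E.
  by rewrite (conj_VE hU y0) lte_fin; lra.
case/ereal_sup_gt => _ [x /= + <-]; rewrite in_itv /= andbT lte_fin => x0 hx.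
have [n /andP[xn nx]] := pos_rat_enum_dense x0 (divr_gt0 e2 y0).
exists n; have Uxn : U x <= U (pos_rat_enum n).
  by case: hU => _ [Umono _]; apply: Umono => //; exact: ltW.
have : pos_rat_enum n * y < (x + e / 2 / y) * y by rewrite ltr_pM2r.
rewrite mulrDl divfK ?gt_eqF //.
have : x * y < pos_rat_enum n * y by rewrite ltr_pM2r.
lra.
Qed.

End pos_rat_enum.

Section duality.
Context {R : realType} d (Omega : measurableType d) (P : probability Omega R).
Variable U : R -> R.
Hypothesis hU : is_utility U.
Variable Z : Omega -> R.
Hypothesis mZ : measurable_fun setT Z.
Hypothesis Zpos : forall w, 0 < Z w.
Hypothesis iZ : P.-integrable setT (EFin \o Z).
Hypothesis hV : forall y, 0 < y -> (\int[P]_w conj_V U (y * Z w) < +oo)%E.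

Section approx_argmax.
Variables (y e : R).
Hypotheses (y0 : 0 < y) (e0 : 0 < e).

Definition approx_optimal n w : bool :=
  conj_Vr U (y * Z w) - e < U (pos_rat_enum n) - pos_rat_enum n * (y * Z w).

Lemma measurable_approx_optimal n : measurable [set w | approx_optimal n w].
Proof.
have mVr : measurable_fun setT (fun w => conj_Vr U (y * Z w) - e).
  apply: measurable_funB => //.
  exact: measurableT_comp (fine_measurable measurableT) (measurable_conj_V_Z U mZ y).
have mr : measurable_fun setT (fun w => U (pos_rat_enum n) - pos_rat_enum n * (y * Z w)).
  by apply: measurable_funB => //; do 2 apply: measurable_funM => //.
have mtrue : measurable [set true] by [].
by have := measurable_fun_ltr mVr mr measurableT mtrue; rewrite setTI.
Qed.

Lemma approx_optimal_exists w : exists n, approx_optimal n w.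
Proof. exact: conj_Vr_pos_rat_approx hU (mulr_gt0 y0 (Zpos w)) e0. Qed.

Definition approx_argmax : Omega -> R :=
  pos_rat_enum \o first_index approx_optimal_exists.

Lemma measurable_approx_argmax : measurable_fun setT approx_argmax.
Proof.
apply: measurable_fun_nat_factor.
exact: measurable_first_index_eq measurable_approx_optimal approx_optimal_exists.
Qed.

Lemma approx_argmaxP w :
  conj_Vr U (y * Z w) - e < U (approx_argmax w) - approx_argmax w * (y * Z w).
Proof. exact: (first_indexP approx_optimal_exists w). Qed.

Lemma approx_argmax_budget_integrable :
  P.-integrable setT (fun w => (Z w * approx_argmax w)%:E).
Proof.
have y2 : 0 < y / 2 by rewrite divr_gt0.
have ibnd := integrable_EFin_comb (2 / y) (- (2 / y)) (2 / y * e)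
  (integrable_conj_Vr_Z hU mZ Zpos iZ hV y2) (integrable_conj_Vr_Z hU mZ Zpos iZ hV y0).
apply: le_integrable ibnd => //.
  by apply/measurable_EFinP; apply: measurable_funM => //; exact: measurable_approx_argmax.
move=> w _ /=; set f := approx_argmax w.
have f0 : 0 < f by exact: pos_rat_enum_gt0.
have Zf0 : 0 <= Z w * f by rewrite mulr_ge0 // ltW.
have h1 := conj_Vr_ge hU f0 (mulr_gt0 y2 (Zpos w)).
have h2 := approx_argmaxP w; rewrite -/f in h2.
set a := Z w * f in Zf0 *; set V1 := conj_Vr U _ in h1 *; set V2 := conj_Vr U _ in h2 *.
have {}h1 : U f - y / 2 * a <= V1.
  by have -> : y / 2 * a = f * (y / 2 * Z w) by rewrite /a; ring.
have {}h2 : V2 - e < U f - 2 * (y / 2 * a).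
  by have -> : 2 * (y / 2 * a) = f * (y * Z w) by rewrite /a; field.
have ya0 : 0 <= y / 2 * a by rewrite mulr_ge0 // ltW.
have -> : 2 / y * V1 + - (2 / y) * V2 + 2 / y * e = 2 / y * (V1 - V2 + e) by ring.
rewrite lee_fin !ger0_norm //; last by rewrite mulr_ge0 ?divr_ge0 //; lra.
have -> : a = 2 / y * (y / 2 * a) by field; rewrite gt_eqF.
by rewrite ler_pM2l ?divr_gt0 //; lra.
Qed.

Let cost := fine (\int[P]_w (Z w * approx_argmax w)%:E).

Let costE : (\int[P]_w (Z w * approx_argmax w)%:E = cost%:E)%E.
Proof. by rewrite fineK // (integrable_fin_num measurableT approx_argmax_budget_integrable). Qed.

Lemma approx_argmax_budget x : cost <= x -> budget_set P Z x approx_argmax.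
Proof.
move=> cx; split; first exact: measurable_approx_argmax.
split; first by move=> w; exact/ltW/pos_rat_enum_gt0.
by rewrite costE lee_fin.
Qed.

Lemma approx_argmax_expect_utility :
  (\int[P]_w conj_V U (y * Z w) + (y * cost - e)%:E
     <= expect_utility P (Uext U) approx_argmax)%E.
Proof.
pose g w := (conj_V U (y * Z w) + ((EFin \o cst (- e)%R) w + y%:E * (Z w * approx_argmax w)%:E))%E.
have iZf := approx_argmax_budget_integrable.
have ic : P.-integrable setT (EFin \o cst (- e)%R) by exact: finite_measure_integrable_cst.
have iyZf : P.-integrable setT (fun w => y%:E * (Z w * approx_argmax w)%:E)%E.
  exact: integrableZl.
have ig : P.-integrable setT g.
  by apply: integrableD => //; [exact: integrable_conj_V_Z|exact: integrableD].
have gle w : (g w <= Uext U (approx_argmax w))%E.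
  have yZ0 := mulr_gt0 y0 (Zpos w); have f0 : 0 < approx_argmax w := pos_rat_enum_gt0 _.
  rewrite /g (UextE U f0) (conj_VE hU yZ0) /= -EFinM -!EFinD lee_fin.
  have := approx_argmaxP w; rewrite mulrCA [approx_argmax w * _]mulrC; lra.
apply: le_trans (integral_le_expect_utility hU mZ Zpos iZ hV (measurable_Uext hU)
  (Uext_le_conj_Vr hU) (approx_argmax_budget (lexx _)) ig gle).
rewrite integralD //; [|exact: integrable_conj_V_Z|exact: integrableD].
rewrite integralD //.
by rewrite integral_EFin_cst integralZl // costE -EFinM -EFinD [- e + _]addrC.
Qed.

End approx_argmax.

Lemma sup_value_fun_sub_le y : 0 < y ->
  (ereal_sup [set (value_fun P Z (Uext U) x - (x * y)%:E)%E | x in `]0%R, +oo[%classic]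
    <= \int[P]_w conj_V U (y * Z w))%E.
Proof.
move=> y0; apply: ge_ereal_sup => _ [x _ <-].
rewrite leeBlDr //; apply: ge_ereal_sup => _ [f hf <-].
exact: (expect_utility_le_dual hU mZ Zpos iZ hV (measurable_Uext hU) (Uext_le_conj_Vr hU) hf y0).
Qed.

Lemma integral_conj_V_le_sup_value_fun y : 0 < y ->
  (\int[P]_w conj_V U (y * Z w)
    <= ereal_sup [set (value_fun P Z (Uext U) x - (x * y)%:E)%E | x in `]0%R, +oo[%classic])%E.
Proof.
move=> y0; have Vfin := integrable_fin_num measurableT (integrable_conj_V_Z mZ iZ hV y0).
rewrite -(fineK Vfin); apply/lee_addgt0Pr => e e0; have e2 : 0 < e / 2 by rewrite divr_gt0.
set cost := fine (\int[P]_w (Z w * approx_argmax y0 e2 w)%:E).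
have cost0 : 0 <= cost.
  by rewrite fine_ge0 // integral_ge0 // => w _; rewrite lee_fin mulr_ge0 // ltW // pos_rat_enum_gt0.
pose x := cost + e / 2 / y; have x0 : 0 < x by rewrite ltr_wpDl // divr_gt0.
have hx : (value_fun P Z (Uext U) x - (x * y)%:E <=
    ereal_sup [set (value_fun P Z (Uext U) x - (x * y)%:E)%E | x in `]0%R, +oo[%classic])%E.
  by apply: ereal_sup_ubound; exists x; rewrite //= in_itv /= andbT.
apply: le_trans (leeD hx (lexx e%:E)).
have -> : (value_fun P Z (Uext U) x - (x * y)%:E + e%:E =
           value_fun P Z (Uext U) x - (y * cost - e / 2)%:E)%E.
  rewrite -addeA -EFinN -EFinD; congr (_ + _%:E)%E.
  by rewrite /x; field; rewrite gt_eqF.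
rewrite leeBrDr // fineK //.
apply: le_trans (approx_argmax_expect_utility y0 e2) _.
apply: ereal_sup_ubound; exists (approx_argmax y0 e2) => //.
by apply: approx_argmax_budget; rewrite lerDl ltW // divr_gt0.
Qed.

Lemma integral_conj_V_Z_dual y : 0 < y ->
  (\int[P]_w conj_V U (y * Z w)
    = ereal_sup [set (value_fun P Z (Uext U) x - (x * y)%:E)%E | x in `]0%R, +oo[%classic])%E.
Proof.
move=> y0; apply/eqP; rewrite eq_le.
by rewrite integral_conj_V_le_sup_value_fun // sup_value_fun_sub_le.
Qed.

End duality.

Lemma ereal_sup_convex_comb_le (R : realType) (A B : set (\bar R)) (t : R) (M : \bar R) :
  ereal_sup A \is a fin_num -> ereal_sup B \is a fin_num -> 0 < t -> t < 1 ->
  (forall a b, A a -> B b -> (t%:E * a + (1 - t)%:E * b <= M)%E) ->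
  (t%:E * ereal_sup A + (1 - t)%:E * ereal_sup B <= M)%E.
Proof.
move=> Afin Bfin t0 t1 H; rewrite -(fineK Afin) -(fineK Bfin).
set sa := fine _; set sb := fine _.
rewrite -!EFinM -EFinD; apply/lee_addgt0Pr => e e0.
have /ereal_sup_gt[a Aa /ltW ea] : ((sa - e)%:E < ereal_sup A)%E.
  by rewrite -(fineK Afin) lte_fin -/sa; lra.
have /ereal_sup_gt[b Bb /ltW eb] : ((sb - e)%:E < ereal_sup B)%E.
  by rewrite -(fineK Bfin) lte_fin -/sb; lra.
apply: le_trans (leeD (H a b Aa Bb) (lexx e%:E)).
have -> : t * sa + (1 - t) * sb = t * (sa - e) + (1 - t) * (sb - e) + e by ring.
rewrite !EFinD !EFinM leeD2r //.
by apply: leeD; apply: lee_wpmul2l => //; rewrite lee_fin; lra.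
Qed.

Section value_fun.
Context {R : realType} d (Omega : measurableType d) (P : probability Omega R).
Variable Z : Omega -> R.

Lemma value_fun_nondecreasing (W : R -> \bar R) :
  {homo value_fun P Z W : x x' / x <= x' >-> (x <= x')%E}.
Proof.
move=> x x' xx'; apply: ereal_sup_le => _ [f hf <-].
by exists f => //; exact: budget_set_le hf.
Qed.

End value_fun.

Section envelope.
Context {R : realType} d (Omega : measurableType d) (P : probability Omega R).
Variable U : R -> R.
Hypothesis hU : is_utility U.
Variable Z : Omega -> R.
Hypothesis mZ : measurable_fun setT Z.
Hypothesis Zpos : forall w, 0 < Z w.
Hypothesis iZ : P.-integrable setT (EFin \o Z).
Hypothesis hV : forall y, 0 < y -> (\int[P]_w conj_V U (y * Z w) < +oo)%E.

Local Notation u := (value_fun P Z (Uext U)).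
Local Notation uc := (value_fun P Z (Uc U)).

Let integral_le_EU_Uext := integral_le_expect_utility hU mZ Zpos iZ hV
  (measurable_Uext hU) (Uext_le_conj_Vr hU).
Let integral_le_EU_Uc := integral_le_expect_utility hU mZ Zpos iZ hV
  (measurable_Uc hU) (Uc_le_conj_Vr hU).
Let EU_Uc_integrable := expect_utility_integrable hU mZ Zpos iZ hV
  (measurable_Uc hU) (Uc_le_conj_Vr hU).

Lemma value_fun_Uext_lb x : 0 < x -> exists r : R, (r%:E <= u x)%E.
Proof.
move=> x0; have [c c0 hc] := budget_set_cst Zpos iZ x0.
exists (U c); apply: le_trans (ereal_sup_ubound _) => /=; last by exists (fun=> c).
rewrite -(integral_EFin_cst P (U c)).
by apply: integral_le_EU_Uext hc _ _ => //; [exact: finite_measure_integrable_cst|move=> w; rewrite UextE].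
Qed.

Lemma value_fun_Uc_le_dual x y : 0 < y ->
  (uc x <= \int[P]_w conj_V U (y * Z w) + (x * y)%:E)%E.
Proof.
move=> y0; apply: ge_ereal_sup => _ [f hf <-].
exact: (expect_utility_le_dual hU mZ Zpos iZ hV (measurable_Uc hU)
  (Uc_le_conj_Vr hU) hf y0).
Qed.

Lemma value_fun_Uext_le_Uc x : (u x <= uc x)%E.
Proof.
apply: ge_ereal_sup => _ [f hf <-].
rewrite {1}/expect_utility; case: ifPn => hn; last by rewrite leNye.
apply: le_trans (integral_le_EU_Uc hf (expect_utility_integrable hU mZ Zpos iZ hV
  (measurable_Uext hU) (Uext_le_conj_Vr hU) hf hn) (fun w => Uext_le_Uc U (f w))) _.
by apply: ereal_sup_ubound; exists f.
Qed.

Lemma value_fun_Uc_fin_num x : 0 < x -> uc x \is a fin_num.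
Proof.
move=> x0; have [r hr] := value_fun_Uext_lb x0; rewrite fin_numElt; apply/andP; split.
  by apply: lt_le_trans (le_trans hr (value_fun_Uext_le_Uc x)); rewrite ltNyr.
apply: le_lt_trans (value_fun_Uc_le_dual x ltr01) _.
by rewrite lte_add_pinfty ?ltry // (_ : 1 = 1%:R) //; exact: hV.
Qed.

Lemma expect_utility_Uc_convex_comb_le f1 f2 x1 x2 t :
  budget_set P Z x1 f1 -> budget_set P Z x2 f2 -> 0 < t -> t < 1 ->
  (t%:E * expect_utility P (Uc U) f1 + (1 - t)%:E * expect_utility P (Uc U) f2
     <= uc (t * x1 + (1 - t) * x2))%E.
Proof.
move=> hf1 hf2 t0 t1; have t1' : 0 < 1 - t by rewrite subr_gt0.
rewrite /expect_utility; case: ifPn => h1; last by rewrite gt0_mulNyeDl // leNye.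
case: ifPn => h2; last by rewrite gt0_mulNyeDr // leNye.
have i1 := EU_Uc_integrable hf1 h1; have i2 := EU_Uc_integrable hf2 h2.
have [mf1 [f10 fx1]] := hf1; have [mf2 [f20 fx2]] := hf2.
have iZf1 := budget_set_integrable mZ Zpos hf1; have iZf2 := budget_set_integrable mZ Zpos hf2.
pose fm w := t * f1 w + (1 - t) * f2 w.
have hfm : budget_set P Z (t * x1 + (1 - t) * x2) fm.
  split; first by apply: measurable_funD; apply: measurable_funM.
  split; first by move=> w; rewrite /fm addr_ge0 // mulr_ge0 // ltW.
  have -> : (\int[P]_w (Z w * fm w)%:E =
      \int[P]_w (t%:E * (Z w * f1 w)%:E + (1 - t)%:E * (Z w * f2 w)%:E))%E.
    by apply: eq_integral => w _; rewrite -!EFinM -EFinD /fm; congr _%:E; ring.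
  rewrite integralD //; [|exact: integrableZl|exact: integrableZl].
  rewrite !integralZl //.
  apply: (@le_trans _ _ (t%:E * x1%:E + (1 - t)%:E * x2%:E)%E); last by rewrite -!EFinM -EFinD.
  by apply: leeD; apply: lee_wpmul2l => //; rewrite lee_fin ltW.
pose g w := (t%:E * Uc U (f1 w) + (1 - t)%:E * Uc U (f2 w))%E.
have ig : P.-integrable setT g by apply: integrableD => //; exact: integrableZl.
have gle w : (g w <= Uc U (fm w))%E by exact: (proj2 (Uc_concave hU)) (ltW t0) (ltW t1).
have <- : (\int[P]_w g w)%E = (t%:E * \int[P]_w Uc U (f1 w) + (1 - t)%:E * \int[P]_w Uc U (f2 w))%E.
  by rewrite integralD //; [rewrite !integralZl|exact: integrableZl|exact: integrableZl].
apply: le_trans (integral_le_EU_Uc hfm ig gle) _.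
by apply: ereal_sup_ubound; exists fm.
Qed.

Lemma value_fun_Uc_concave : concave_on `]0, +oo[%classic uc.
Proof.
have pos (x : R) : `]0, +oo[%classic x -> 0 < x by rewrite /= in_itv /= andbT.
split=> [x /pos x0|x1 x2 t /pos x10 /pos x20 t0 t1].
  by have /fin_numP[] := value_fun_Uc_fin_num x0.
have [->|tn0] := eqVneq t 0.
  by rewrite mul0e add0e subr0 mul1e mul0r add0r mul1r.
have [->|tn1] := eqVneq t 1.
  by rewrite subrr mul0e adde0 mul1e mul1r mul0r addr0.
have t_gt0 : 0 < t by rewrite lt_neqAle eq_sym tn0 t0.
have t_lt1 : t < 1 by rewrite lt_neqAle tn1 t1.
apply: (ereal_sup_convex_comb_le (value_fun_Uc_fin_num x10) (value_fun_Uc_fin_num x20) t_gt0 t_lt1).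
by move=> _ _ [f1 hf1 <-] [f2 hf2 <-]; exact: expect_utility_Uc_convex_comb_le hf1 hf2 t_gt0 t_lt1.
Qed.

Lemma value_fun_Uc_le_affine a b x : 0 <= b -> 0 < x ->
  (forall z, 0 < z -> (u z <= (a + b * z)%:E)%E) -> (uc x <= (a + b * x)%:E)%E.
Proof.
move=> b0 x0 hab; apply/lee_addgt0Pr => e e0.
have ex : 0 < e / x by rewrite divr_gt0.
pose y := b + e / x; have y0 : 0 < y by rewrite ltr_wpDl.
apply: le_trans (value_fun_Uc_le_dual x y0) _.
rewrite (integral_conj_V_Z_dual hU mZ Zpos iZ hV y0).
have -> : (a + b * x)%:E + e%:E = (a%:E + (x * y)%:E)%E.
  by rewrite -EFinD /y; congr _%:E; field; rewrite gt_eqF.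
apply: leeD => //; apply: ge_ereal_sup => _ [z /= + <-]; rewrite in_itv /= andbT => z0.
rewrite EFinN leeBlDr //; apply: le_trans (hab z z0) _.
by rewrite -EFinD lee_fin lerD2l /y mulrDr [z * b]mulrC lerDl mulr_ge0 // ltW.
Qed.

Lemma value_fun_Uc_le_concave_majorant (h : R -> \bar R) x : 0 < x ->
  concave_on `]0, +oo[%classic h ->
  (forall z, `]0, +oo[%classic z -> (u z <= h z)%E) -> (uc x <= h x)%E.
Proof.
move=> x0 hconc hu.
have D (z : R) : 0 < z -> `]0, +oo[%classic z by rewrite /= in_itv /= andbT.
have hfin z : `]0, +oo[%classic z -> h z \is a fin_num.
  move=> Dz; have z0 : 0 < z by move: Dz; rewrite /= in_itv /= andbT.
  have [r hr] := value_fun_Uext_lb z0; rewrite fin_numElt; apply/andP; split.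
    by apply: lt_le_trans (le_trans hr (hu z Dz)); rewrite ltNyr.
  by rewrite ltey; exact: (proj1 hconc).
pose hr := fine \o h.
have hE z : 0 < z -> h z = (hr z)%:E by move=> z0; rewrite /hr /= fineK //; exact/hfin/D.
have uh z : 0 < z -> (u z <= (hr z)%:E)%E by move=> z0; rewrite -hE //; exact/hu/D.
have Dconv (a b t : R) : `]0, +oo[%classic a -> `]0, +oo[%classic b -> 0 <= t -> t <= 1 ->
    `]0, +oo[%classic (t * a + (1 - t) * b).
  rewrite /= !in_itv /= !andbT => a0 b0 t0 t1.
  have [->|tp] := eqVneq t 0; first by rewrite mul0r add0r subr0 mul1r.
  have : 0 < t * a by rewrite mulr_gt0 // lt_neqAle eq_sym tp.
  have : 0 <= (1 - t) * b by rewrite mulr_ge0 ?subr_ge0 // ltW.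
  lra.
have [s hs] := concave_supergradient (concave_on_fine Dconv hfin hconc) x0.
pose sp := Num.max s 0; have sp0 : 0 <= sp by rewrite le_max lexx orbT.
have bound z : 0 < z -> (u z <= (hr x - sp * x + sp * z)%:E)%E.
  move=> z0; have -> : hr x - sp * x + sp * z = hr x + sp * (z - x) by ring.
  have [s0|s0] := leP 0 s.
    by rewrite /sp max_l //; apply: le_trans (uh z z0) _; rewrite lee_fin hs.
  rewrite /sp (max_r (ltW s0)) mul0r addr0; have [xz|zx] := leP x z.
    apply: le_trans (uh z z0) _; rewrite lee_fin; apply: le_trans (hs z z0) _.
    by rewrite gerDl nmulr_rle0 // subr_ge0.
  exact: le_trans (value_fun_nondecreasing P Z (Uext U) (ltW zx)) (uh x x0).
rewrite (hE x x0); apply: le_trans (value_fun_Uc_le_affine sp0 x0 bound) _.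
by rewrite lee_fin subrK.
Qed.

Lemma value_fun_Uc_concave_envelope x : 0 < x ->
  uc x = concave_envelope_on `]0, +oo[%classic u x.
Proof.
move=> x0; apply/eqP; rewrite eq_le; apply/andP; split.
  by apply: le_ereal_inf_tmp => _ [h [hconc hu] <-]; exact: value_fun_Uc_le_concave_majorant.
apply: ereal_inf_lbound; exists uc => //; split; first exact: value_fun_Uc_concave.
by move=> z _; exact: value_fun_Uext_le_Uc.
Qed.

End envelope.

Lemma consistent_price_system_terminal (R : realType) d (Omega : measurableType d)
    (P : probability Omega R) (T : R) (F : R -> set (set Omega)) (lam : R)
    (S Z0 Z1 : R -> Omega -> R) :
  0 < T -> filtration T F -> consistent_price_system P T F lam S Z0 Z1 ->
  [/\ measurable_fun setT (Z0 T), forall w, 0 < Z0 T w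
    & P.-integrable setT (EFin \o Z0 T)].
Proof.
move=> T0 [FT _] [Zpos [_ [[Zad [Zint _]] _]]]; have [T0' TT] := (ltW T0, lexx T).
split; [|by move=> w; case: (Zpos T w T0' TT)|exact: Zint].
by move=> _ B mB; rewrite setTI; apply: (proj2 (FT T)); exact: Zad.
Qed.

Theorem theorem4p1 (R : realType) (d : measure_display) (Omega : measurableType d)
  (P : probability Omega R) (T : R) (F : R -> set (set Omega))
  (lam : R) (S Z0 Z1 : R -> Omega -> R) (U : R -> R) :
  0 < T ->
  filtration T F -> usual_conditions P T F ->
  0 < lam -> lam < 1 ->
  (forall t w, 0 <= t -> t <= T -> 0 < S t w) -> cadlag T S -> adapted T F S ->
  consistent_price_system P T F lam S Z0 Z1 ->
  is_utility U ->
  (forall y, 0 < y -> (\int[P]_w conj_V U (y * Z0 T w)%R < +oo)%E) ->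
  (forall y, 0 < y ->
     (\int[P]_w conj_V U (y * Z0 T w)%R =
      ereal_sup [set (value_fun P (Z0 T) (Uext U) x - (x * y)%R%:E)%E
                | x in `]0%R, +oo[%classic])%E) /\
  (forall x, 0 < x ->
     value_fun P (Z0 T) (Uc U) x =
     concave_envelope_on `]0, +oo[%classic (value_fun P (Z0 T) (Uext U)) x).
Proof.
move=> T0 hF _ _ _ _ _ _ hZ hU hV.
have [mZ Zpos iZ] := consistent_price_system_terminal T0 hF hZ.
split=> [y y0|x x0].
- by rewrite (integral_conj_V_Z_dual hU mZ Zpos iZ hV y0).
- by rewrite (value_fun_Uc_concave_envelope hU mZ Zpos iZ hV x0).
Qed.
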